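(* Let $\mathcal{X},\mathcal{Y}$ be finite sets, $P_{XY}$ a distribution on $\mathcal{X}\times\mathcal{Y}$, and $\mu\ge0$. Then $$\lim_{\delta\to0}R_\mu(\delta\mid P_{XY})=R_\mu(P_{XY}).$$
   Context: For $\delta\ge0$, $\mathcal{R}^*_{\mathtt{WAK}}(\delta\mid P_{XY})$ is the set of pairs $(r_0,r_2)$ for which there exists a conditional distribution $P_{W|XY}$ with finite $\mathcal{W}$, $|\mathcal{W}|\le|\mathcal{X}||\mathcal{Y}|+2$, such that, for $(W,X,Y)\sim P_{XY}P_{W|XY}$, $r_0\ge I(W\wedge X,Y)$, $r_2\ge H(Y\mid W)$ and $\delta\ge I(W\wedge Y\mid X)$. For $\mu\ge0$, $R_\mu(\delta\mid P_{XY}):=\min\{r_0+\mu r_2:(r_0,r_2)\in\mathcal{R}^*_{\mathtt{WAK}}(\delta\mid P_{XY})\}$, and $R_\mu(P_{XY}):=R_\mu(0\mid P_{XY})$. *)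

From HB Require Import structures.
From mathcomp Require Import all_boot all_order all_algebra.
From mathcomp Require Import all_classical all_reals all_analysis.
Set Implicit Arguments. Unset Strict Implicit. Unset Printing Implicit Defensive.
Import Order.TTheory GRing.Theory Num.Theory.
Local Open Scope ring_scope.
Local Open Scope classical_set_scope.

Section Defs.
Context {R : realType}.

Definition is_dist {T : finType} (p : T -> R) : Prop :=
  (forall t, 0 <= p t) /\ \sum_(t : T) p t = 1.

Definition ent {T : finType} (p : T -> R) : R :=
  - \sum_(t : T) (if p t == 0 then 0 else p t * ln (p t)).

Context {X Y : finType}.

(* (W,X,Y) ~ P_XY P_{W|XY}, with K xy w = P_{W|XY}(w | x y) *)
Section Joint.
Variables (W : finType) (P : X * Y -> R) (K : X * Y -> W -> R).

Definition H_WXY := ent (fun t : W * (X * Y) => P t.2 * K t.2 t.1).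
Definition H_W := ent (fun w : W => \sum_(xy : X * Y) P xy * K xy w).
Definition H_XY := ent P.
Definition H_X := ent (fun x : X => \sum_(y : Y) P (x, y)).
Definition H_WY :=
  ent (fun t : W * Y => \sum_(x : X) P (x, t.2) * K (x, t.2) t.1).
Definition H_WX :=
  ent (fun t : W * X => \sum_(y : Y) P (t.2, y) * K (t.2, y) t.1).

Definition MI_W_XY := H_W + H_XY - H_WXY.
Definition CH_Y_W := H_WY - H_W.
Definition CMI_W_Y_X := H_WX + H_XY - H_WXY - H_X.
End Joint.

Definition WAK_region (P : X * Y -> R) (delta : R) : set (R * R) :=
  [set r | exists (W : finType) (K : X * Y -> W -> R),
     [/\ (#|W| <= #|X| * #|Y| + 2)%N,
         (forall xy, is_dist (K xy)),
         MI_W_XY P K <= r.1,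
         CH_Y_W P K <= r.2 &
         CMI_W_Y_X P K <= delta]].

Definition R_mu (P : X * Y -> R) (mu delta : R) : R :=
  inf [set r.1 + mu * r.2 | r in WAK_region P delta].

End Defs.

From HB Require Import structures.
From mathcomp Require Import all_boot all_order all_algebra.
From mathcomp Require Import all_classical all_reals all_analysis.
From mathcomp Require Import lra.
Import Order.TTheory GRing.Theory Num.Theory.
Import numFieldNormedType.Exports.
Local Open Scope ring_scope.
Local Open Scope classical_set_scope.

(* Padding a kernel P_{W|XY} with symbols of probability zero changes none of
   the information quantities, so every alphabet with |W| <= |X||Y| + 2 may be
   replaced by W = 'I_(|X||Y| + 2).  Then R_mu(delta) is the infimum of the
   continuous objective I(W /\ X,Y) + mu H(Y|W) over the compact set of
   stochastic matrices under the continuous constraint I(W /\ Y|X) <= delta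
   (continuity of the entropy comes down to that of x ln x at 0).  Such a value
   function is right-continuous at 0: if f >= m where g <= 0, then g has a
   positive minimum d on the compact set where f <= m - e, so f > m - e
   wherever g < d. *)


Section real_lemmas.
Context {R : realType}.

Lemma inf_coinitial (A B : set R) :
  A `<=` B -> (forall b, B b -> exists2 a, A a & a <= b) -> inf A = inf B.
Proof.
move=> AB coAB; have [A0|/set0P [a0 Aa0]] := eqVneq A set0.
  suff -> : B = set0 by rewrite A0.
  by apply/seteqP; split=> // b /coAB [a]; rewrite A0.
have [lbA|nlbA] := pselect (has_lbound A); last first.
  rewrite !inf_out //; first by case=> _ [x lbB]; apply: nlbA; exists x => a /AB /lbB.
  by case.
have lbB : has_lbound B.
  by case: lbA => x lbA; exists x => b /coAB [a /lbA xa ab]; exact: le_trans ab.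
apply/eqP; rewrite eq_le; apply/andP; split.
  apply: lb_le_inf; first by exists a0; exact: AB.
  by move=> b /coAB [a Aa ab]; apply: le_trans ab; exact: ge_inf.
apply: lb_le_inf; first by exists a0.
by move=> a /AB; exact: ge_inf.
Qed.

Lemma xlnx_le_sqrt (t : R) : t <= 1 -> `|t * ln t| <= 2 * Num.sqrt t.
Proof.
move=> t1; have [t0|t0] := lerP t 0.
  by rewrite ln0 // mulr0 normr0 mulr_ge0 // sqrtr_ge0.
set s := Num.sqrt t; have s0 : 0 < s by rewrite sqrtr_gt0.
have ts : t = s * s by rewrite -expr2 sqr_sqrtr // ltW.
have lnt0 : t * ln t <= 0 by rewrite mulr_ge0_le0 ?ln_le0 // ltW.
(* [ln x < x] at [x = 1/s] gives [- ln s < 1/s] *)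
have : ln s^-1 < s^-1 by rewrite ln_sublinear // invr_gt0.
rewrite lnV ?posrE // => lns.
have : s * - ln s < 1 by rewrite -(mulfV (lt0r_neq0 s0)) ltr_pM2l.
rewrite ler0_norm // ts lnM ?posrE //; nra.
Qed.

Lemma continuous_xlnx : continuous (fun x : R => x * ln x).
Proof.
move=> x; have [x0|x0|->] := ltgtP x 0.
- apply: (near_cst_continuous 0); near=> y.
  by rewrite ln0 ?mulr0 //; apply: ltW; near: y; exact: lt_nbhsl.
- by apply: cvgM; [exact: cvg_id | exact: continuous_ln].
- rewrite /continuous_at mul0r.
  have sqrt0 : 2 * Num.sqrt y @[y --> (0 : R)] --> (0 : R).
    have : {for 0, continuous (fun y : R => 2 * Num.sqrt y)}.
      by apply: continuousM; [exact: cst_continuous | exact: sqrt_continuous].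
    by move=> /(_ _); rewrite sqrtr0 mulr0.
  have := cvgN sqrt0; rewrite oppr0 => /(_ _) nsqrt0.
  apply: (squeeze_cvgr _ nsqrt0 sqrt0).
  near=> y; rewrite -ler_norml xlnx_le_sqrt //.
  by near: y; apply: (cvgr_le 0 cvg_id); exact: ltr01.
Unshelve. all: by end_near.
Qed.
End real_lemmas.

Section entropy.
Context {R : realType}.

Lemma entE (T : finType) (p : T -> R) : ent p = - \sum_t p t * ln (p t).
Proof.
by congr (- _); apply: eq_bigr => t _; case: eqP => // ->; rewrite mul0r.
Qed.

Lemma continuous_ent (T : topologicalType) (Z : finType) (p : T -> Z -> R) :
  (forall z, continuous (fun t => p t z)) -> continuous (fun t => ent (p t)).
Proof.
move=> p_cont; under eq_fun do rewrite entE.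
move=> t; apply: cvgN; apply: (continuous_big add_continuous) => z _ s.
apply: (@continuous_comp _ _ _ (p^~ z) (fun u => u * ln u)); first exact: p_cont.
exact: continuous_xlnx.
Qed.

Lemma ent_zero_extension {A B : finType} {h : A -> B} {p : A -> R} {q : B -> R} :
  injective h -> (forall a, q (h a) = p a) ->
  (forall b, (forall a, h a != b) -> q b = 0) -> ent q = ent p.
Proof.
move=> h_inj qh q0; congr (- _).
rewrite (partition_big h xpredT) //=; apply: eq_bigr => b _.
have [a /eqP <-|nb] := pickP (fun a => h a == b).
  by rewrite (big_pred1 a) ?qh // => a'; exact: inj_eq.
by rewrite big_pred0 // q0 ?eqxx // => a; rewrite nb.
Qed.

Lemma ent_zero_extension_fst {A B Z : finType} {h : A -> B}
    {p : A * Z -> R} {q : B * Z -> R} :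
  injective h -> (forall a z, q (h a, z) = p (a, z)) ->
  (forall b z, (forall a, h a != b) -> q (b, z) = 0) -> ent q = ent p.
Proof.
move=> h_inj qh q0; apply: (@ent_zero_extension _ _ (fun t : A * Z => (h t.1, t.2))).
- by move=> [a z] [a' z'] [/h_inj -> ->].
- by move=> [a z]; exact: qh.
move=> [b z] nb; apply: q0 => a; apply: contra (nb (a, z)) => /eqP ->.
exact: eqxx.
Qed.
End entropy.

Section pointwise_evaluation.
Context {R : realType} (I : eqType).

Lemma continuous_eval (i : I) : continuous (fun k : {ptws I -> R} => k i).
Proof. exact: (@proj_continuous _ (fun _ => R)). Qed.

Lemma continuous_scaled_eval (c : R) (i : I) :
  continuous (fun k : {ptws I -> R} => c * k i).
Proof.
move=> k; apply: (continuous_comp (continuous_eval i k)).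
exact: mulrl_continuous.
Qed.
End pointwise_evaluation.

Section stochastic_kernels.
Context {R : realType} (A B : finType).

Definition stochastic : set {ptws A * B -> R} :=
  [set k | forall a, is_dist (fun b => k (a, b))].

Lemma compact_stochastic : compact stochastic.
Proof.
have box := @tychonoff _ (fun _ : A * B => R) (fun _ => `[0, 1])
  (fun _ => @segment_compact R 0 1).
apply: (subclosed_compact _ box); last first.
  move=> k k_st [a b]; have [k0 k1] := k_st a; rewrite /= in_itv /= k0 -k1.
  by rewrite (bigD1 b) //= lerDl sumr_ge0.
have -> : stochastic = \bigcap_(a in setT)
    ((\bigcap_(b in setT) [set k | 0 <= k (a, b)]) `&` [set k | \sum_b k (a, b) = 1]).
  apply/seteqP; split => k /=.
    by move=> k_st a _; split; [move=> b _; exact: (k_st a).1 | exact: (k_st a).2].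
  by move=> k_st a; have [k0 k1] := k_st a I; split => // b; exact: k0.
apply: closed_bigI => a _; apply: closedI.
  apply: closed_bigI => b _.
  apply: (@preimage_closed _ _ (fun k : {ptws A * B -> R} => k (a, b))
    [set x : R | 0 <= x]); first by move=> k _; exact: continuous_eval.
  exact: closed_ge.
apply: (@preimage_closed _ _ (fun k : {ptws A * B -> R} => \sum_b k (a, b))
  [set x : R | x = 1]).
  by move=> k _; apply: (continuous_big add_continuous) => b _; exact: continuous_eval.
exact: closed_eq.
Qed.
End stochastic_kernels.

Section constrained_inf.
Context {R : realType} {T : topologicalType} (S : set T) (f g : T -> R).
Hypotheses (S_compact : compact S) (f_cont : continuous f) (g_cont : continuous g).

Definition constrained_inf (d : R) := inf [set f k | k in S `&` [set k | g k <= d]].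

Lemma compact_constraint_relax {m m' : R} : m' < m ->
    (forall k, S k -> g k <= 0 -> m <= f k) ->
  exists2 d, 0 < d & forall k, S k -> g k < d -> m' < f k.
Proof.
move=> m'm feas; set C := S `&` [set k | f k <= m'].
have C_compact : compact C.
  apply: compact_closedI => //.
  apply: (@preimage_closed _ _ f [set x : R | x <= m']); last exact: closed_le.
  by move=> k _; exact: f_cont.
have [C0|/set0P [c0 Cc0]] := eqVneq C set0.
  exists 1 => // k Sk _; rewrite ltNge; apply/negP => fk.
  by have : C k by []; rewrite C0.
have [c /set_mem [Sc /= fc] cmin] :=
  compact_EVT_min (ex_intro _ c0 Cc0) C_compact (continuous_subspaceT g_cont).
exists (g c); first by rewrite ltNge; apply/negP => /(feas c Sc); lra.
move=> k Sk gk; rewrite ltNge; apply/negP => fk.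
by have := cmin k (mem_set (conj Sk fk)); lra.
Qed.

Lemma constrained_inf_cvg : (exists2 k, S k & g k <= 0) ->
  constrained_inf d @[d --> 0^'+] --> constrained_inf 0.
Proof.
move=> [k0 Sk0 gk0].
have [c _ cmin] := compact_EVT_min (ex_intro _ k0 Sk0) S_compact
  (continuous_subspaceT f_cont).
have lb d : has_lbound [set f k | k in S `&` [set k | g k <= d]].
  by exists (f c) => _ [k [Sk _] <-]; exact: cmin (mem_set Sk).
apply/cvgrPdist_le => e e0.
have feas0 k : S k -> g k <= 0 -> constrained_inf 0 <= f k.
  by move=> Sk gk; apply: ge_inf (lb 0) _ _; exists k.
have lt_e : constrained_inf 0 - e < constrained_inf 0 by rewrite gtrBl.
have [d d0 relax] := compact_constraint_relax lt_e feas0.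
near=> delta.
have delta0 : 0 < delta by near: delta; exact: nbhs_right_gt.
have delta_d : delta < d by near: delta; exact: nbhs_right_lt.
have up : constrained_inf delta <= constrained_inf 0.
  apply: lb_le_inf; first by exists (f k0), k0.
  move=> _ [k [Sk /= gk] <-]; apply: ge_inf (lb delta) _ _.
  by exists k => //; split => //=; lra.
have low : constrained_inf 0 - e <= constrained_inf delta.
  apply: lb_le_inf; first by exists (f k0), k0 => //; split => //=; lra.
  by move=> _ [k [Sk /= gk] <-]; apply/ltW/relax => //=; lra.
by rewrite ler_norml; apply/andP; split; lra.
Unshelve. all: by end_near.
Qed.
End constrained_inf.

Section kernel_padding.
Context {R : realType} {X Y V W : finType} (P : X * Y -> R).
Context (h : V -> W) (K : X * Y -> V -> R).
Hypothesis h_inj : injective h.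

Definition pad : X * Y -> W -> R := fun xy w => \sum_(v | h v == w) K xy v.

Lemma pad_image xy v : pad xy (h v) = K xy v.
Proof. by rewrite /pad (big_pred1 v) // => v'; exact: inj_eq. Qed.

Lemma pad_out xy w : (forall v, h v != w) -> pad xy w = 0.
Proof. by move=> hw; rewrite /pad big_pred0 // => v; exact/negbTE. Qed.

Lemma is_dist_pad xy : is_dist (K xy) -> is_dist (pad xy).
Proof.
move=> [K0 K1]; split=> [w|]; first exact: sumr_ge0.
by rewrite -K1 (partition_big h xpredT).
Qed.

Lemma H_W_pad : H_W P pad = H_W P K.
Proof.
rewrite /H_W; apply: (ent_zero_extension h_inj) => [v|w hw].
  by apply: eq_bigr => xy _; rewrite pad_image.
by rewrite big1 // => xy _; rewrite pad_out ?mulr0.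
Qed.

Lemma H_WXY_pad : H_WXY P pad = H_WXY P K.
Proof.
rewrite /H_WXY; apply: (ent_zero_extension_fst h_inj) => [v xy|w xy hw] /=.
  by rewrite pad_image.
by rewrite pad_out ?mulr0.
Qed.

Lemma H_WY_pad : H_WY P pad = H_WY P K.
Proof.
rewrite /H_WY; apply: (ent_zero_extension_fst h_inj) => [v y|w y hw] /=.
  by apply: eq_bigr => x _; rewrite pad_image.
by rewrite big1 // => x _; rewrite pad_out ?mulr0.
Qed.

Lemma H_WX_pad : H_WX P pad = H_WX P K.
Proof.
rewrite /H_WX; apply: (ent_zero_extension_fst h_inj) => [v x|w x hw] /=.
  by apply: eq_bigr => y _; rewrite pad_image.
by rewrite big1 // => y _; rewrite pad_out ?mulr0.
Qed.

Lemma MI_pad : MI_W_XY P pad = MI_W_XY P K.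
Proof. by rewrite /MI_W_XY H_W_pad H_WXY_pad. Qed.

Lemma CH_pad : CH_Y_W P pad = CH_Y_W P K.
Proof. by rewrite /CH_Y_W H_W_pad H_WY_pad. Qed.

Lemma CMI_pad : CMI_W_Y_X P pad = CMI_W_Y_X P K.
Proof. by rewrite /CMI_W_Y_X H_WX_pad H_WXY_pad. Qed.
End kernel_padding.

Section point_kernel.
Context {R : realType} {X Y W : finType} (P : X * Y -> R) (w0 : W).

Definition point_kernel : X * Y -> W -> R := fun _ w => (w == w0)%:R.

Lemma is_dist_point_kernel xy : is_dist (point_kernel xy).
Proof.
split=> [w|]; first exact: ler0n.
by rewrite /point_kernel (bigD1 w0) //= eqxx big1 ?addr0 // => w /negbTE ->.
Qed.

Lemma CMI_point_kernel : CMI_W_Y_X P point_kernel = 0.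
Proof.
rewrite /CMI_W_Y_X.
have out (w : W) (Z : eqType) (z : Z) :
    (forall z', (w0, z') != (w, z)) -> (w == w0)%:R = 0 :> R.
  by move=> /(_ z); rewrite xpair_eqE eqxx andbT eq_sym => /negbTE ->.
have -> : H_WX P point_kernel = H_X P.
  apply: (@ent_zero_extension _ _ _ (fun x => (w0, x)))
    => [x x' [] //|x|[w x] /out w0w].
    by apply: eq_bigr => y _; rewrite /point_kernel eqxx mulr1.
  by rewrite big1 // => y _; rewrite /point_kernel w0w mulr0.
have -> : H_WXY P point_kernel = H_XY P.
  apply: (@ent_zero_extension _ _ _ (fun xy => (w0, xy)))
    => [xy xy' [] //|xy|[w xy] /out w0w].
    by rewrite /point_kernel /= eqxx mulr1.
  by rewrite /point_kernel /= w0w mulr0.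
by rewrite addrK subrr.
Qed.
End point_kernel.

Section wak_reduction.
Context {R : realType} {X Y : finType} (P : X * Y -> R) (mu : R).
Let W := 'I_(#|X| * #|Y|).+2.

Definition kernel_of (k : {ptws (X * Y) * W -> R}) : X * Y -> W -> R :=
  fun xy w => k (xy, w).

Definition wak_objective (k : {ptws (X * Y) * W -> R}) :=
  MI_W_XY P (kernel_of k) + mu * CH_Y_W P (kernel_of k).

Definition wak_leakage (k : {ptws (X * Y) * W -> R}) := CMI_W_Y_X P (kernel_of k).

Let continuous_H_W : continuous (fun k => H_W P (kernel_of k)).
Proof.
apply: continuous_ent => w; apply: (continuous_big add_continuous) => xy _.
exact: continuous_scaled_eval.
Qed.

Let continuous_H_WXY : continuous (fun k => H_WXY P (kernel_of k)).
Proof. by apply: continuous_ent => t; exact: continuous_scaled_eval. Qed.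

Let continuous_H_WY : continuous (fun k => H_WY P (kernel_of k)).
Proof.
apply: continuous_ent => t; apply: (continuous_big add_continuous) => x _.
exact: continuous_scaled_eval.
Qed.

Let continuous_H_WX : continuous (fun k => H_WX P (kernel_of k)).
Proof.
apply: continuous_ent => t; apply: (continuous_big add_continuous) => y _.
exact: continuous_scaled_eval.
Qed.

Lemma continuous_wak_objective : continuous wak_objective.
Proof.
move=> k.
have := cvgD (cvgB (cvgD (continuous_H_W k) (cvg_cst (H_XY P))) (continuous_H_WXY k))
  (cvgM (cvg_cst mu) (cvgB (continuous_H_WY k) (continuous_H_W k))).
exact.
Qed.

Lemma continuous_wak_leakage : continuous wak_leakage.
Proof.
move=> k.
have := cvgB (cvgB (cvgD (continuous_H_WX k) (cvg_cst (H_XY P))) (continuous_H_WXY k))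
  (cvg_cst (H_X P)).
exact.
Qed.

Lemma wak_feasible : exists2 k, stochastic _ _ k & wak_leakage k <= 0.
Proof.
exists (fun i => point_kernel ord0 i.1 i.2).
  by move=> xy; exact: (is_dist_point_kernel ord0 xy).
by rewrite /wak_leakage (_ : kernel_of _ = point_kernel ord0) // CMI_point_kernel.
Qed.

Lemma R_mu_constrained_inf : 0 <= mu -> forall delta,
  R_mu P mu delta = constrained_inf (stochastic _ _) wak_objective wak_leakage delta.
Proof.
move=> mu0 delta; symmetry; apply: inf_coinitial.
  move=> _ [k [k_st /= k_leak] <-].
  exists (MI_W_XY P (kernel_of k), CH_Y_W P (kernel_of k)) => //.
  by exists W, (kernel_of k); split => //; rewrite card_ord addn2.
move=> _ [r [V [K [V_card K_dist MI_r CH_r leak]]] <-].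
have V_le : (#|V| <= (#|X| * #|Y|).+2)%N by rewrite -addn2.
pose h v : W := widen_ord V_le (enum_rank v).
have h_inj : injective h by move=> v v' [] /ord_inj /enum_rank_inj.
pose k : {ptws (X * Y) * W -> R} := fun i => pad h K i.1 i.2.
have kE : kernel_of k = pad h K by [].
exists (wak_objective k).
  exists k => //; split; first by move=> xy; exact: is_dist_pad.
  by rewrite /= /wak_leakage kE CMI_pad.
rewrite /wak_objective kE MI_pad // CH_pad //.
by apply: lerD => //; exact: ler_wpM2l.
Qed.
End wak_reduction.

Theorem lemma3 (R : realType) (X Y : finType) (P : X * Y -> R) (mu : R) :
  is_dist P -> 0 <= mu ->
  R_mu P mu delta @[delta --> 0^'+] --> R_mu P mu 0.
Proof.
move=> _ mu0.
have -> : R_mu P mu =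
    constrained_inf (stochastic _ _) (wak_objective P mu) (wak_leakage P).
  by apply: funext; exact: R_mu_constrained_inf.
apply: constrained_inf_cvg.
- exact: compact_stochastic.
- exact: continuous_wak_objective.
- exact: continuous_wak_leakage.
exact: wak_feasible.
Qed.
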